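(* Let $(X,\mathcal{B},\mu,T)$ be a measure-preserving transformation of type $\mathbf{II}_\infty$. Let $\alpha$ be a local partition whose core $A$ is a sweep-out set. Then $$\lim_{n\to\infty}\sup\Bigl\{\mu(a):\ a\in\bigvee_{k=0}^{n-1}T^{-k}\alpha,\ 0<\mu(a)<\infty\Bigr\}=0.$$
   Context: Let $(X,\mathcal{B},\mu)$ be a standard $\sigma$-finite measure space and $T$ a measure-preserving transformation. Type $\mathbf{II}_\infty$: $T$ is conservative and there is no $T$-invariant set of finite positive measure. For a countable partition $\alpha$, define $H_\mu(\alpha)=\sum_{a\in\alpha,\,0<\mu(a)<\infty}\mu(a)\log\frac{1}{\mu(a)}$; atoms of infinite measure contribute $0$. A countable partition $\alpha$ is local with core $A$ if $0<\mu(A)<\infty$, $X\setminus A\in\alpha$ and $H_\mu(\alpha)<\infty$. A set $A$ is a sweep-out set if $\bigcup_{n\ge0}T^{-n}A=X$ mod $\mu$. *)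

From HB Require Import structures.
From mathcomp Require Import all_boot all_order all_algebra.
From mathcomp Require Import all_classical all_reals all_analysis.
Set Implicit Arguments. Unset Strict Implicit. Unset Printing Implicit Defensive.
Import Order.TTheory GRing.Theory Num.Theory.
Local Open Scope classical_set_scope.
Local Open Scope ring_scope.

Section Defs.
Context (d : measure_display) (X : measurableType d) (R : realType).

Definition standard_borel : Prop :=
  exists f : X -> R, injective f /\ measurable_fun setT f /\
    measurable (range f) /\ (forall B, measurable B -> measurable (f @` B)).

Variable (mu : {measure set X -> \bar R}) (T : X -> X).

Definition measure_preserving : Prop :=
  measurable_fun setT T /\
  forall B, measurable B -> mu (T @^-1` B) = mu B.

Definition wandering (W : set X) : Prop :=
  measurable W /\ forall n : nat, (0 < n)%N -> W `&` (iter n T) @^-1` W = set0.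

Definition conservative : Prop :=
  forall W, wandering W -> mu W = 0%E.

Definition invariant (B : set X) : Prop := T @^-1` B = B.

Definition type_II_infty : Prop :=
  conservative /\
  ~ (exists B, measurable B /\ invariant B /\ (0 < mu B < +oo)%E).

Definition countable_partition (alpha : set (set X)) : Prop :=
  countable alpha /\ (forall a, alpha a -> measurable a) /\
  trivIset alpha id /\ \bigcup_(a in alpha) a = setT.

Definition finpos_atoms (alpha : set (set X)) : set (set X) :=
  [set a | alpha a /\ (0 < mu a < +oo)%E].

Definition eta (t : R) : R := t * ln (t^-1).

Definition finite_entropy (alpha : set (set X)) : Prop :=
  (\esum_(a in finpos_atoms alpha) (`| eta (fine (mu a)) |)%:E < +oo)%E.

Definition local_partition (alpha : set (set X)) (A : set X) : Prop :=
  countable_partition alpha /\ (0 < mu A < +oo)%E /\ alpha (~` A) /\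
  finite_entropy alpha.

Definition sweep_out (A : set X) : Prop :=
  mu (~` \bigcup_(n in [set: nat]) (iter n T) @^-1` A) = 0%E.

Definition join_iter (alpha : set (set X)) (n : nat) : set (set X) :=
  [set b | exists f : nat -> set X, (forall k, (k < n)%N -> alpha (f k)) /\
     b = \bigcap_(k in `I_n) (iter k T) @^-1` (f k)].

Definition max_atom (alpha : set (set X)) (n : nat) : \bar R :=
  ereal_sup [set mu a | a in finpos_atoms (join_iter alpha n)].

End Defs.

From Pilot Require Import Defs.
From HB Require Import structures.
From mathcomp Require Import all_boot all_order all_algebra.
From mathcomp Require Import all_classical all_reals all_analysis.
From mathcomp Require Import zify.
Import Order.TTheory GRing.Theory Num.Theory.
Local Open Scope classical_set_scope.
Local Open Scope ring_scope.
Set Implicit Arguments. Unset Strict Implicit. Unset Printing Implicit Defensive.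

(* An atom of the n-th refinement that contains z is governed by the first time
   k < n at which the orbit of z visits the core A.  If there is none, the atom
   contains every point avoiding A up to time n, a set of infinite measure since
   mu X = oo.  If k is large, the atom lies in the set of points entering A for
   the first time at time k, whose measure equals that of the points of A not
   returning before time k + 1 and hence tends to 0 by conservativity.  If k is
   small, T^k maps the atom into an atom of the (n - k)-th refinement inside A,
   and these become uniformly small: otherwise a decreasing-intersection argument
   yields a point y of A all of whose atoms have measure >= eps.  By sweep-out the
   orbit of y keeps returning to A, and the itinerary classes of the return
   points are disjoint or equal subsets of A of measure >= eps; two of them
   coincide, which produces a set of finite positive measure to which every point
   returns within bounded time, hence a finite invariant set of positive
   measure, impossible in type II_infty. *)

Lemma cvge0_eventually_le (R : realType) (u : nat -> \bar R) :
  (forall eps, 0 < eps -> exists N, forall n, (N <= n)%N -> (0 <= u n <= eps%:E)%E) ->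
  u @ \oo --> 0%E.
Proof.
move=> usmall; have ufin eps n : 0 < eps -> (0 <= u n <= eps%:E)%E -> u n \is a fin_num.
  by move=> _ /andP[u0 ueps]; rewrite ge0_fin_numE //; exact: le_lt_trans ueps (ltey _).
apply/fine_cvgP; split.
  have [N uN] := usmall 1 ltr01; exists N => // n Nn; exact: ufin ltr01 (uN n Nn).
apply/cvgrPdist_le => eps eps0; have [N uN] := usmall eps eps0; exists N => // n Nn.
have /andP[u0 ueps] := uN n Nn; have unfin := ufin eps n eps0 (uN n Nn).
by rewrite /= sub0r normrN ger0_norm ?fine_ge0 // -lee_fin fineK.
Qed.

Section measure_lemmas.
Context d (X : measurableType d) (R : realType) (mu : {measure set X -> \bar R}).

Lemma measure_bigcup_null (I : countType) (F : I -> set X) :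
  (forall i, measurable (F i)) -> (forall i, mu (F i) = 0%E) ->
  mu (\bigcup_i F i) = 0%E.
Proof.
move=> mF F0; have mU : measurable (\bigcup_i F i).
  exact: countable_bigcupT_measurable.
have -> : \bigcup_i F i =
    \bigcup_n (if @unpickle I n is Some i then F i else set0).
  apply/seteqP; split => x [i _ Fix]; first by exists (pickle i); rewrite ?pickleK.
  by case: (unpickle i) Fix => // j Fjx; exists j.
apply/(negligibleP mu); first by apply: bigcupT_measurable => n; case: unpickle.
apply: negligible_bigcup => n; case: unpickle => [i|]; last exact: negligible_set0.
exact/(negligibleP mu (mF i))/F0.
Qed.

Lemma ge_measure_bigcap (F : nat -> set X) (c : \bar R) :
  (forall n, measurable (F n)) -> nonincreasing_seq F -> (mu (F 0%N) < +oo)%E ->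
  (forall n, c <= mu (F n))%E -> (c <= mu (\bigcap_n F n))%E.
Proof.
move=> mF dF F0 cF.
have Fcvg := nonincreasing_cvg_mu F0 mF (bigcapT_measurable mF) dF.
apply: (cvge_to_ge Fcvg); exact: nearW.
Qed.

Lemma not_disjoint_seq_measure_ge (A : set X) (F : nat -> set X) (c : R) :
  0 < c -> measurable A -> (mu A < +oo)%E -> (forall n, measurable (F n)) ->
  (forall n, F n `<=` A) -> (forall n, c%:E <= mu (F n))%E ->
  exists i j, (i < j)%N /\ F i `&` F j !=set0.
Proof.
move=> c0 mA Afin mF FA cF; apply: contrapT => Fdisj.
have mU n : measurable (\big[setU/set0]_(i < n) F i).
  by apply: bigsetU_measurable => i _.
have Ule n : ((n%:R * c)%:E <= mu (\big[setU/set0]_(i < n) F i))%E.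
  elim: n => [|n IH]; first by rewrite big_ord0 mul0r measure0.
  have disj : \big[setU/set0]_(i < n) F i `&` F n = set0.
    rewrite -bigcup_mkord; apply/seteqP; split => [x [[i /= ilt Fix] Fnx]|//].
    by apply: Fdisj; exists i, n; split => //; exists x.
  rewrite big_ord_recr /= (measureU mu (mU n) (mF n) disj).
  rewrite -[n.+1]addn1 natrD mulrDl mul1r EFinD.
  exact: leeD IH (cF n).
have Afin' : mu A \is a fin_num by rewrite ge0_fin_numE.
pose N := (Num.truncn (fine (mu A) / c)).+1.
have : ((N%:R * c)%:E <= mu A)%E.
  apply: le_trans (Ule N) _; apply: le_measure; rewrite ?inE.
  - exact: mU.
  - exact: mA.
  - by rewrite -bigcup_mkord => x [i _ /FA].
by rewrite -(fineK Afin') lee_fin -ler_pdivlMr // leNgt truncnS_gt.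
Qed.

End measure_lemmas.

Section iterates.
Context d (X : measurableType d) (R : realType) (mu : {measure set X -> \bar R}).
Variable T : X -> X.
Hypothesis mT : measurable_fun setT T.
Hypothesis mu_preimage : forall B, measurable B -> mu (T @^-1` B) = mu B.

Lemma measurable_preimage B : measurable B -> measurable (T @^-1` B).
Proof. by move=> mB; rewrite -[_ @^-1` _]setTI; exact: mT. Qed.

Lemma measurable_preimage_iter k B :
  measurable B -> measurable (iter k T @^-1` B).
Proof.
elim: k B => [//|k IH] B mB; apply: (IH (T @^-1` B)).
exact: measurable_preimage.
Qed.

Lemma measure_preimage_iter k B : measurable B -> mu (iter k T @^-1` B) = mu B.
Proof.
elim: k B => [//|k IH] B mB.
by rewrite -(mu_preimage mB); apply: (IH (T @^-1` B)); exact: measurable_preimage.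
Qed.

Lemma preimage_iterSr k B : iter k.+1 T @^-1` B = T @^-1` (iter k T @^-1` B).
Proof. by apply/seteqP; split => x; rewrite /preimage /= -iterSr. Qed.

Hypothesis no_finite_invariant :
  ~ (exists B, measurable B /\ Defs.invariant T B /\ (0 < mu B < +oo)%E).

Lemma subinvariant_measure U :
  measurable U -> U `<=` T @^-1` U -> (0 < mu U)%E -> mu U = +oo%E.
Proof.
move=> mU UT U0; apply/eqP; rewrite -leye_eq leNgt; apply/negP => Ufin.
pose F k := iter k T @^-1` U.
have mF k : measurable (F k) by exact: measurable_preimage_iter.
have Finc : nondecreasing_seq F.
  apply/nondecreasing_seqP => k; apply/subsetPset => x Fkx.
  exact: (UT _ Fkx).
have Fcvg : mu \o F @ \oo --> mu (\bigcup_n F n).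
  by apply: nondecreasing_cvg_mu => //; exact: bigcupT_measurable.
have muFE : mu (\bigcup_n F n) = mu U.
  have muF : mu \o F = cst (mu U).
    by apply: funext => k; exact: measure_preimage_iter.
  rewrite muF in Fcvg; exact: (cvg_unique (@ereal_hausdorff R) Fcvg (cvg_cst (mu U))).
apply: no_finite_invariant; exists (\bigcup_n F n); split.
  exact: bigcupT_measurable.
split; last by rewrite muFE U0 Ufin.
apply/seteqP; split => x [k _ Fkx].
  by exists k.+1 => //; rewrite /F preimage_iterSr.
by exists k => //; rewrite /F /preimage /= -iterSr; exact: (UT _ Fkx).
Qed.

Lemma bounded_return_measure V K :
  measurable V -> (0 < mu V)%E ->
  (forall x, V x -> exists2 r, (0 < r <= K)%N & V (iter r T x)) ->
  mu V = +oo%E.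
Proof.
move=> mV V0 Vret; apply/eqP; rewrite -leye_eq leNgt; apply/negP => Vfin.
pose U := \bigcup_(k < K.+1) iter k T @^-1` V.
have mU : measurable U.
  by apply: bigcup_measurable => k _; exact: measurable_preimage_iter.
have VU : V `<=` U by move=> x Vx; exists 0%N.
have UT : U `<=` T @^-1` U.
  move=> x [[|k] /= kK Vx].
    have [[//|r] /andP[_ rK] Vr] := Vret x Vx.
    by exists r; [exact: ltnW|rewrite /preimage /= -iterSr].
  by exists k; [exact: ltnW|rewrite /preimage /= -iterSr].
have Ufin : (mu U < +oo)%E.
  apply: (@le_lt_trans _ _ (\sum_(k < K.+1) mu (iter k T @^-1` V))%E).
    apply: (content_subadditive mu (A := U) (F := fun k => iter k T @^-1` V)) => //.
      by move=> k _; exact: measurable_preimage_iter.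
    by rewrite /U bigcup_mkord.
  have muVk (k : 'I_K.+1) : (mu (iter k T @^-1` V) < +oo)%E.
    by rewrite measure_preimage_iter.
  exact (lte_sum_pinfty _ (fun k _ => muVk k)).
have U0 := lt_le_trans V0 (le_measure mu (mem_set mV) (mem_set mU) VU).
by rewrite (subinvariant_measure mU UT U0) ltxx in Ufin.
Qed.

Lemma measureT_infinite B : measurable B -> (0 < mu B)%E -> mu setT = +oo%E.
Proof.
move=> mB B0; apply/eqP; rewrite -leye_eq leNgt; apply/negP => Tfin.
apply: no_finite_invariant; exists setT; split => //; split.
  by rewrite /Defs.invariant preimage_setT.
rewrite Tfin andbT; apply: lt_le_trans B0 _.
by apply: le_measure; rewrite ?inE.
Qed.

End iterates.

Section first_entry.
Context d (X : measurableType d) (R : realType) (mu : {measure set X -> \bar R}).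
Variables (T : X -> X) (A : set X).
Hypothesis mT : measurable_fun setT T.
Hypothesis mu_preimage : forall B, measurable B -> mu (T @^-1` B) = mu B.
Hypothesis mA : measurable A.
Hypothesis Afin : (mu A < +oo)%E.

Definition avoid n : set X := \bigcap_(i in `I_n) iter i T @^-1` ~` A.
Definition first_entry n : set X := avoid n `&` iter n T @^-1` A.
Definition no_return n : set X := A `&` T @^-1` avoid n.
Definition return_at n : set X := A `&` T @^-1` first_entry n.

Lemma measurable_avoid n : measurable (avoid n).
Proof.
apply: bigcap_measurableType => i _.
exact/(measurable_preimage_iter mT)/measurableC.
Qed.

Lemma measurable_first_entry n : measurable (first_entry n).
Proof.
apply: measurableI; first exact: measurable_avoid.
exact: measurable_preimage_iter.
Qed.

Lemma measurable_no_return n : measurable (no_return n).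
Proof. by apply: measurableI => //; exact/(measurable_preimage mT)/measurable_avoid. Qed.

Lemma measurable_return_at n : measurable (return_at n).
Proof.
by apply: measurableI => //; exact/(measurable_preimage mT)/measurable_first_entry.
Qed.

Lemma avoid0 : avoid 0 = setT.
Proof. by apply/seteqP; split => // x _ i. Qed.

Lemma avoidS n : avoid n.+1 = ~` A `&` T @^-1` avoid n.
Proof.
apply/seteqP; split => x.
  move=> Ax; split; first exact: (Ax 0%N).
  by move=> i ilt; rewrite /preimage /= -iterSr; exact: (Ax i.+1).
move=> [nAx Tx] [|i] ilt; first exact: nAx.
by have := Tx i ilt; rewrite /preimage /= -iterSr.
Qed.

Lemma avoid_split n : avoid n = avoid n.+1 `|` first_entry n.
Proof.
apply/seteqP; split => x.
  move=> Ax; have [Anx|nAnx] := pselect (A (iter n T x)); first by right.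
  left => i /=; rewrite ltnS leq_eqVlt => /orP[/eqP->//|ilt]; exact: Ax.
move=> [Ax i ilt|[Ax _]]; last exact: Ax.
by apply: Ax; exact: ltnW.
Qed.

Lemma first_entryS n : first_entry n.+1 = ~` A `&` T @^-1` first_entry n.
Proof. by rewrite /first_entry avoidS preimage_setI preimage_iterSr setIA. Qed.

Lemma preimage_first_entry n :
  T @^-1` first_entry n = first_entry n.+1 `|` return_at n.
Proof. by rewrite first_entryS /return_at -setIUl setvU setTI. Qed.

Lemma no_returnE n : no_return n = no_return n.+1 `|` return_at n.
Proof. by rewrite /no_return {1}avoid_split preimage_setU setIUr. Qed.

(* Kac-type identity: from n to n + 1 both sides lose exactly [return_at n]. *)
Lemma measure_first_entry n : mu (first_entry n) = mu (no_return n).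
Proof.
elim: n => [|n IH].
  by rewrite /first_entry /no_return avoid0 setTI preimage_setT setIT.
have retfin : mu (return_at n) \is a fin_num.
  rewrite ge0_fin_numE //; apply: le_lt_trans Afin.
  by apply: le_measure; rewrite ?inE //; [exact: measurable_return_at|move=> x []].
have feE : mu (first_entry n) = (mu (first_entry n.+1) + mu (return_at n))%E.
  rewrite -(mu_preimage (measurable_first_entry n)) preimage_first_entry measureU //.
  - exact: measurable_first_entry.
  - exact: measurable_return_at.
  - by apply/seteqP; split => [x [[avx _] [Ax _]]|//]; exact: (avx 0%N).
have nrE : mu (no_return n) = (mu (no_return n.+1) + mu (return_at n))%E.
  rewrite {1}no_returnE measureU //.
  - exact: measurable_no_return.
  - exact: measurable_return_at.
  - apply/seteqP; split => [x [[_ Tx] [_ [_ Tnx]]]|//].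
    by apply: (Tx n) => //=; rewrite /preimage /= -iterSr.
by rewrite -[LHS](addeK _ retfin) -[RHS](addeK _ retfin) -feE -nrE IH.
Qed.

Lemma first_entry_cvg0 :
  conservative mu T -> mu (first_entry n) @[n --> \oo] --> 0%E.
Proof.
move=> Tcons.
have W0 : mu (\bigcap_n no_return n) = 0%E.
  apply: Tcons; split; first exact: bigcapT_measurable measurable_no_return.
  move=> [//|k] _; apply/seteqP; split => [x [Wx WTx]|//].
  have [Ax _] := WTx 0%N I; have [_ Tx] := Wx k.+1 I.
  by apply: (Tx k) => //=; rewrite /preimage /= -iterSr.
have -> : (fun n => mu (first_entry n)) = mu \o no_return.
  by apply: funext => n; exact: measure_first_entry.
rewrite -W0; apply: nonincreasing_cvg_mu.
- apply: le_lt_trans Afin; apply: le_measure; rewrite ?inE //.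
  + exact: measurable_no_return.
  + by move=> x [].
- exact: measurable_no_return.
- exact: bigcapT_measurable measurable_no_return.
- apply/nonincreasing_seqP => n; apply/subsetPset.
  rewrite [X in _ `<=` X]no_returnE; exact: subsetUl.
Qed.

Lemma measure_avoid n : mu setT = +oo%E -> mu (avoid n) = +oo%E.
Proof.
move=> muT; elim: n => [|n IH]; first by rewrite avoid0.
have fefin : (mu (first_entry n) < +oo)%E.
  apply: le_lt_trans Afin; rewrite -(measure_preimage_iter mT mu_preimage n mA).
  apply: le_measure; rewrite ?inE; [exact: measurable_first_entry| |by move=> x []].
  exact: measurable_preimage_iter.
have disj : avoid n.+1 `&` first_entry n = set0.
  by apply/seteqP; split => [x [avx [_ Anx]]|//]; exact: (avx n (ltnSn n) Anx).
move: IH; rewrite avoid_split measureU //; last 2 first.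
- exact: measurable_avoid.
- exact: measurable_first_entry.
move=> sum_inf; apply/eqP; rewrite -leye_eq leNgt; apply/negP => avoidfin.
by have := lte_add_pinfty avoidfin fefin; rewrite sum_inf ltxx.
Qed.

Lemma avoid_or_first_entry n z : avoid n z \/ exists2 k, (k < n)%N & first_entry k z.
Proof.
elim: n => [|n [zav|[k kn zk]]]; first by left; rewrite avoid0.
- by move: zav; rewrite avoid_split => -[|zn]; [left|right; exists n].
- by right; exists k => //; exact: ltnW.
Qed.

End first_entry.

Section itineraries.
Context d (X : measurableType d) (R : realType) (mu : {measure set X -> \bar R}).
Variables (T : X -> X) (alpha : set (set X)) (e : nat -> set X) (A : set X).
Hypothesis mT : measurable_fun setT T.
Hypothesis mu_preimage : forall B, measurable B -> mu (T @^-1` B) = mu B.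
Hypothesis no_finite_invariant :
  ~ (exists B, measurable B /\ Defs.invariant T B /\ (0 < mu B < +oo)%E).
Hypothesis alpha_measurable : forall a, alpha a -> measurable a.
Hypothesis alpha_trivIset : trivIset alpha id.
Hypothesis alpha_e : forall n, alpha (e n).
Hypothesis e_cover : forall x, exists n, e n x.
Hypothesis alphaAC : alpha (~` A).
Hypothesis mA : measurable A.
Hypothesis Afin : (mu A < +oo)%E.
Hypothesis A_sweep_out : sweep_out mu T A.

(** * Cells, atoms and itineraries *)

Definition cell_index (x : X) : nat := projT1 (cid (e_cover x)).
Definition cell (x : X) : set X := e (cell_index x).

Lemma cell_in x : cell x x.
Proof. by rewrite /cell /cell_index; case: cid. Qed.

Lemma alpha_cell x : alpha (cell x).
Proof. exact: alpha_e. Qed.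

Lemma cellE a x : alpha a -> a x -> cell x = a.
Proof.
move=> alpha_a ax; apply: alpha_trivIset => //; first exact: alpha_cell.
by exists x; exact: (conj (cell_in x) ax).
Qed.

Lemma cellC x : ~ A x -> cell x = ~` A.
Proof. exact: cellE. Qed.

Lemma cell_core x w : A x -> cell w = cell x -> A w.
Proof.
move=> Ax wx; apply: contrapT => nAw.
by have := cell_in x; rewrite -wx cellC.
Qed.

Definition itinerary (y : X) (k : nat) : set X := cell (iter k T y).

Definition atom n y : set X :=
  [set z | forall k, (k < n)%N -> itinerary z k = itinerary y k].

Definition itinerary_class y : set X := [set z | itinerary z = itinerary y].

Lemma atomE n y : atom n y = \bigcap_(k in `I_n) iter k T @^-1` itinerary y k.
Proof.
apply/seteqP; split => z.
  by move=> zy k kn; rewrite /preimage /= -(zy k kn); exact: cell_in.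
by move=> zy k kn; exact: (cellE (alpha_cell _) (zy k kn)).
Qed.

Lemma measurable_atom n y : measurable (atom n y).
Proof.
rewrite atomE; apply: bigcap_measurableType => k _.
exact/(measurable_preimage_iter mT)/alpha_measurable/alpha_cell.
Qed.

Lemma atom_eq n y z : atom n y z -> atom n z = atom n y.
Proof. by move=> zy; apply/seteqP; split => w wz k kn; rewrite wz // zy. Qed.

Lemma atom_le m n y : (m <= n)%N -> atom n y `<=` atom m y.
Proof. by move=> mn z zy k km; apply: zy; exact: leq_trans km mn. Qed.

Lemma le_measure_atom m n y : (m <= n)%N -> (mu (atom n y) <= mu (atom m y))%E.
Proof.
by move=> mn; apply: le_measure; rewrite ?inE; [exact: measurable_atom..|exact: atom_le].
Qed.

Lemma atom_core n y : (0 < n)%N -> A y -> atom n y `<=` A.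
Proof. by move=> n0 Ay z zy; apply: (cell_core Ay); exact: (zy 0%N n0). Qed.

Lemma atom_shift m r y : atom (m + r) y `<=` iter r T @^-1` atom m (iter r T y).
Proof. by move=> z zy k km; rewrite /itinerary -!iterD; apply: zy; rewrite ltn_add2r. Qed.

Lemma itinerary_classE y : itinerary_class y = \bigcap_m atom m.+1 y.
Proof.
apply/seteqP; split => z.
  by move=> zy m _ k _; rewrite zy.
by move=> zy; apply/funext => k; exact: (zy k I k (ltnSn k)).
Qed.

Lemma itinerary_class_eq y z :
  itinerary_class y z -> itinerary_class z = itinerary_class y.
Proof. by move=> zy; apply/seteqP; split => w; rewrite /itinerary_class /= zy. Qed.

Lemma itinerary_class_iter r y z :
  itinerary_class y z -> itinerary_class (iter r T y) (iter r T z).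
Proof.
move=> zy; apply/funext => k; rewrite /itinerary -!iterD.
exact: (congr1 (fun f => f (k + r)%N) zy).
Qed.

Lemma join_iter_atom n b z : join_iter T alpha n b -> b z -> b = atom n z.
Proof.
move=> [f [alpha_f ->]] bz; rewrite atomE; apply: eq_bigcapr => k kn.
by rewrite /itinerary (cellE (alpha_f k kn) (bz k kn)).
Qed.

Lemma atom_join_iter n y : join_iter T alpha n (atom n y).
Proof. by exists (itinerary y); split; [move=> k _; exact: alpha_cell|exact: atomE]. Qed.

(* Cylinders are indexed by words over the enumeration [e] of alpha, so there
   are countably many atoms. *)
Definition cylinder (s : seq nat) : set X :=
  [set z | forall k, (k < size s)%N -> e (nth 0%N s k) (iter k T z)].

Definition word n y : seq nat := mkseq (fun k => cell_index (iter k T y)) n.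

Lemma cylinder_atom s z : cylinder s z -> cylinder s = atom (size s) z.
Proof.
move=> zs; apply/seteqP; split => w.
  move=> ws k ks; rewrite /itinerary.
  by rewrite (cellE (alpha_e _) (ws k ks)) (cellE (alpha_e _) (zs k ks)).
move=> wz k ks; rewrite -(cellE (alpha_e _) (zs k ks)); have := wz k ks.
by rewrite /itinerary => <-; exact: cell_in.
Qed.

Lemma word_cylinder n y : cylinder (word n y) y.
Proof. by move=> k; rewrite size_mkseq => kn; rewrite nth_mkseq //; exact: cell_in. Qed.

Lemma measurable_cylinder s : measurable (cylinder s).
Proof.
have [->|/set0P[z zs]] := eqVneq (cylinder s) set0; first exact: measurable0.
by rewrite (cylinder_atom zs); exact: measurable_atom.
Qed.

Lemma atom_predE (P : set X -> Prop) n :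
  [set y | P (atom n y)] =
  \bigcup_(s in [set s | size s = n /\ P (cylinder s)]) cylinder s.
Proof.
apply/seteqP; split => y.
  move=> Py; exists (word n y); last exact: word_cylinder.
  by rewrite /= (cylinder_atom (@word_cylinder n y)) size_mkseq.
by move=> [s [<- Ps] ys]; rewrite /= -(cylinder_atom ys).
Qed.

Lemma measurable_atom_pred (P : set X -> Prop) n : measurable [set y | P (atom n y)].
Proof.
rewrite atom_predE bigcup_mkcond; apply: countable_bigcupT_measurable => [|s].
  exact: countableP.
by case: ifP => _; [exact: measurable_cylinder|exact: measurable0].
Qed.

Lemma measure_null_atoms n : mu [set y | mu (atom n y) = 0%E] = 0%E.
Proof.
rewrite (atom_predE (fun b => mu b = 0%E)) bigcup_mkcond.
apply: measure_bigcup_null => s.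
  by case: ifP => _; [exact: measurable_cylinder|exact: measurable0].
by case: ifPn => [/set_mem[_]|_] //; exact: measure0.
Qed.

Lemma avoid_atom n z : avoid T A n z -> avoid T A n `<=` atom n z.
Proof.
by move=> zA w wA k kn; rewrite /itinerary (cellC (zA k kn)) (cellC (wA k kn)).
Qed.

Lemma atom_first_entry n z k :
  (k < n)%N -> first_entry T A k z -> atom n z `<=` first_entry T A k.
Proof.
move=> kn [zA Ak] w wz; split; last exact: (cell_core Ak (wz k kn)).
move=> i ik; have := wz i (ltn_trans ik kn); rewrite /itinerary (cellC (zA i ik)).
by move=> wi; have := cell_in (iter i T w); rewrite wi.
Qed.

(** * Heavy points *)

Definition heavy (eps : R) y := A y /\ forall m, (eps%:E <= mu (atom m.+1 y))%E.

Lemma measurable_itinerary_class y : measurable (itinerary_class y).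
Proof.
rewrite itinerary_classE; apply: bigcapT_measurable => m.
exact: measurable_atom.
Qed.

Lemma heavy_itinerary_class eps y :
  heavy eps y -> (eps%:E <= mu (itinerary_class y))%E.
Proof.
move=> [Ay ymu]; rewrite itinerary_classE; apply: ge_measure_bigcap => //.
- by move=> m; exact: measurable_atom.
- by apply/nonincreasing_seqP => m; apply/subsetPset; exact: atom_le.
- apply: le_lt_trans Afin; apply: le_measure; rewrite ?inE //.
    exact: measurable_atom.
  exact: atom_core.
Qed.

Lemma heavy_returns eps y :
  0 < eps -> heavy eps y -> exists2 r, (0 < r)%N & A (iter r T y).
Proof.
move=> eps0 yheavy; apply: contrapT => noret.
pose N := ~` \bigcup_(n in [set: nat]) iter n T @^-1` A.
have mN : measurable N.
  by apply/measurableC/bigcup_measurable => n _; exact: measurable_preimage_iter.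
have classN : itinerary_class y `<=` T @^-1` N.
  move=> z zy [n _ Anz]; apply: noret; exists n.+1 => //.
  apply: (cell_core (x := iter n.+1 T z)); first by rewrite iterSr.
  exact: esym (congr1 (fun f => f n.+1) zy).
have class0 : (mu (itinerary_class y) <= mu (T @^-1` N))%E.
  apply: le_measure; rewrite ?inE //; first exact: measurable_itinerary_class.
  exact: measurable_preimage.
rewrite mu_preimage // A_sweep_out in class0.
by have := le_trans (heavy_itinerary_class yheavy) class0; rewrite lee_fin leNgt eps0.
Qed.

Lemma le_measure_atom_shift m r y :
  (mu (atom (m + r) y) <= mu (atom m (iter r T y)))%E.
Proof.
rewrite -(measure_preimage_iter mT mu_preimage r (measurable_atom m (iter r T y))).
apply: le_measure; rewrite ?inE; [exact: measurable_atom| |exact: atom_shift].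
exact/(measurable_preimage_iter mT)/measurable_atom.
Qed.

Lemma heavy_iter eps y r : A (iter r T y) -> heavy eps y -> heavy eps (iter r T y).
Proof.
move=> Ar [_ ymu]; split => // m; apply: le_trans (ymu (m + r)%N) _.
by rewrite -addSn; exact: le_measure_atom_shift.
Qed.

Lemma heavy_orbit eps y0 : 0 < eps -> heavy eps y0 ->
  exists (ys : nat -> X) (r : nat -> nat),
    forall t, [/\ heavy eps (ys t), (0 < r t)%N & ys t.+1 = iter (r t) T (ys t)].
Proof.
move=> eps0 y0heavy.
have return_time y : exists r, heavy eps y -> (0 < r)%N /\ A (iter r T y).
  have [yheavy|ynheavy] := pselect (heavy eps y); last by exists 0%N.
  by have [r r0 Ar] := heavy_returns eps0 yheavy; exists r.
have [rt rtP] := choice return_time.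
pose ys t := iter t (fun y => iter (rt y) T y) y0.
have ysheavy t : heavy eps (ys t).
  by elim: t => [//|t IH]; have [_ Ar] := rtP _ IH; exact: heavy_iter Ar IH.
by exists ys, (rt \o ys) => t; split => //; exact: (rtP _ (ysheavy t)).1.
Qed.

(* The itinerary classes along the returns of a heavy point are disjoint or
   equal subsets of A of measure >= eps, so two of them coincide; every point of
   the classes in between then returns to them within bounded time. *)
Lemma no_heavy_point eps y0 : 0 < eps -> ~ heavy eps y0.
Proof.
move=> eps0 y0heavy; have [ys [r orbit]] := heavy_orbit eps0 y0heavy.
pose D t := itinerary_class (ys t).
have mD t : measurable (D t) by exact: measurable_itinerary_class.
have DA t : D t `<=` A.
  have [[ysA _] _ _] := orbit t.
  by move=> z; rewrite /D itinerary_classE => zD; exact: atom_core ysA _ (zD 0%N I).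
have Deps t : (eps%:E <= mu (D t))%E.
  by have [ysheavy _ _] := orbit t; exact: heavy_itinerary_class.
have [i [j [ij [x [Dix Djx]]]]] := not_disjoint_seq_measure_ge eps0 mA Afin mD DA Deps.
have Dji : D j = D i by rewrite /D -(itinerary_class_eq Djx) (itinerary_class_eq Dix).
pose V := \bigcup_(t in [set t | (i <= t < j)%N]) D t.
have mV : measurable V by apply: bigcup_measurable => t _; exact: mD.
have DiV : D i `<=` V by move=> z zD; exists i => //=; rewrite leqnn ij.
have VA : V `<=` A by move=> z [t _ /DA].
have V0 : (0 < mu V)%E.
  apply: (lt_le_trans _ (le_measure mu (mem_set (mD i)) (mem_set mV) DiV)).
  by apply: (lt_le_trans _ (Deps i)); rewrite lte_fin.
have Vret z : V z -> exists2 k, (0 < k <= \max_(t < j) r t)%N & V (iter k T z).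
  move=> [t /andP[it tj] zD]; have [_ rt0 ysS] := orbit t.
  exists (r t); first by rewrite rt0 (bigD1 (Ordinal tj)) // leq_maxl.
  have zDS : D t.+1 (iter (r t) T z) by rewrite /D ysS; exact: itinerary_class_iter.
  move: tj; rewrite leq_eqVlt => /orP[/eqP tj|tj]; first by apply: DiV; rewrite -Dji -tj.
  by exists t.+1 => //=; rewrite tj andbT; exact: leqW.
have Vfin : (mu V < +oo)%E by apply: le_lt_trans Afin; apply: le_measure; rewrite ?inE.
have := bounded_return_measure mT mu_preimage no_finite_invariant mV V0 Vret.
by move=> Vinf; rewrite Vinf ltxx in Vfin.
Qed.

(* Otherwise the sets G m below form a decreasing sequence of measure >= eps
   inside A, and their intersection consists of heavy points. *)
Lemma core_atoms_small eps : 0 < eps ->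
  exists M, forall m, (M <= m)%N -> forall y, A y -> (mu (atom m y) < eps%:E)%E.
Proof.
move=> eps0; apply: contrapT => nosmall.
have big m : exists2 y, A y & (eps%:E <= mu (atom m y))%E.
  apply: contrapT => nobig; apply: nosmall; exists m => n mn y Ay.
  rewrite ltNge; apply/negP => epsle; apply: nobig; exists y => //.
  exact: le_trans epsle (le_measure_atom y mn).
pose G m := [set y | atom m.+1 y `<=` A /\ (eps%:E <= mu (atom m.+1 y))%E].
have mG m : measurable (G m).
  exact: (measurable_atom_pred (fun b => b `<=` A /\ (eps%:E <= mu b)%E)).
have GA m : G m `<=` A by move=> y [yA _]; exact: yA.
have Gdec : nonincreasing_seq G.
  apply/nonincreasing_seqP => m; apply/subsetPset => y [yA yeps]; split.
    exact: atom_core (yA y _).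
  exact: le_trans yeps (le_measure_atom y (leqnSn _)).
have G0fin : (mu (G 0%N) < +oo)%E.
  by apply: le_lt_trans Afin; apply: le_measure; rewrite ?inE.
have Geps m : (eps%:E <= mu (G m))%E.
  have [y Ay yeps] := big m.+1.
  have yG : atom m.+1 y `<=` G m.
    by move=> z zy; rewrite /G /= (atom_eq zy); split => //; apply: atom_core.
  apply: le_trans yeps _; apply: le_measure; rewrite ?inE //.
  exact: measurable_atom.
have := ge_measure_bigcap mG Gdec G0fin Geps.
have [->|/set0P[y Gy]] := eqVneq (\bigcap_m G m) set0.
  by rewrite measure0 lee_fin leNgt eps0.
move=> _; apply: (@no_heavy_point eps y eps0); split; first exact: GA (Gy 0%N I).
by move=> m; exact: (Gy m I).2.
Qed.

(** * Smallness of the atoms *)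

Lemma finpos_atom_exists n :
  (0 < mu A)%E -> (0 < n)%N -> exists a, finpos_atoms mu (join_iter T alpha n) a.
Proof.
move=> A0 n0; apply: contrapT => nofinpos.
have Anull : A `<=` [set y | mu (atom n y) = 0%E].
  move=> y Ay; apply/eqP; rewrite eq_le measure_ge0 andbT leNgt; apply/negP => y0.
  apply: nofinpos; exists (atom n y); split; first exact: atom_join_iter.
  rewrite y0 /=; apply: le_lt_trans Afin; apply: le_measure; rewrite ?inE //.
    exact: measurable_atom.
  exact: atom_core.
have Ale : (mu A <= mu [set y | mu (atom n y) = 0%E])%E.
  apply: le_measure; rewrite ?inE //.
  exact: (measurable_atom_pred (fun b => mu b = 0%E)).
by rewrite measure_null_atoms leNgt A0 in Ale.
Qed.

Lemma small_atoms eps : conservative mu T -> (0 < mu A)%E -> 0 < eps ->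
  exists N, forall n, (N <= n)%N -> forall a,
    finpos_atoms mu (join_iter T alpha n) a -> (mu a < eps%:E)%E.
Proof.
move=> Tcons A0 eps0; have eps0E : (0 < eps%:E)%E by rewrite lte_fin.
have [K _ Ksmall] := first_entry_cvg0 mT mu_preimage mA Afin Tcons (open_ereal_lt' eps0E).
have [M Msmall] := core_atoms_small eps0.
exists (K + M)%N => n KMn a [an /andP[a0 afin]].
have [z az] : a !=set0.
  by apply/set0P; apply: contraTneq a0 => ->; rewrite measure0 ltxx.
rewrite (join_iter_atom an az) in afin *.
have [zav|[k kn zk]] := avoid_or_first_entry T A n z.
  have : (mu (avoid T A n) <= mu (atom n z))%E.
    apply: le_measure; rewrite ?inE; [exact: measurable_avoid|exact: measurable_atom|].
    exact: avoid_atom.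
  rewrite measure_avoid //; last exact: (measureT_infinite no_finite_invariant mA A0).
  by rewrite leye_eq => /eqP atom_inf; rewrite atom_inf ltxx in afin.
have [Kk|kK] := leqP K k.
  apply: le_lt_trans (Ksmall k Kk); apply: le_measure; rewrite ?inE.
  - exact: measurable_atom.
  - exact: measurable_first_entry.
  - exact: atom_first_entry.
have [_ Ak] := zk; rewrite -(subnK (ltnW kn)).
apply: le_lt_trans (le_measure_atom_shift _ _ _) (Msmall _ _ _ Ak); lia.
Qed.

Lemma max_atom_cvg0 : conservative mu T -> (0 < mu A)%E ->
  max_atom mu T alpha n @[n --> \oo] --> 0%E.
Proof.
move=> Tcons A0; apply: cvge0_eventually_le => eps eps0.
have [N Nsmall] := small_atoms Tcons A0 eps0.
exists N.+1 => n Nn; apply/andP; split.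
  have [a afinpos] := finpos_atom_exists A0 (leq_ltn_trans (leq0n N) Nn).
  by apply: le_trans (measure_ge0 mu a) _; apply: ereal_sup_ubound; exists a.
apply/ereal_supP => _ [a afinpos <-]; apply: ltW.
exact: Nsmall n (ltnW Nn) a afinpos.
Qed.

End itineraries.

Theorem lemma6p1 (d : measure_display) (X : measurableType d) (R : realType)
    (mu : {measure set X -> \bar R}) (T : X -> X)
    (alpha : set (set X)) (A : set X) :
  standard_borel X R ->
  sigma_finite setT mu ->
  measure_preserving mu T ->
  type_II_infty mu T ->
  local_partition mu alpha A ->
  sweep_out mu T A ->
  max_atom mu T alpha n @[n --> \oo] --> 0%E.
Proof.
move=> _ _ [mT mu_preimage] [Tcons no_finite_invariant].
move=> [[alpha_countable [alpha_measurable [alpha_trivIset alpha_cover]]]].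
move=> [/andP[A0 Afin] [alphaAC _]] A_sweep_out.
have mA : measurable A by rewrite -[A]setCK; exact/measurableC/alpha_measurable.
case/pfcard_geP: alpha_countable => [alpha0|[e]]; first by rewrite alpha0 in alphaAC.
have alpha_e n : alpha (e n) by exact: (@funS _ _ _ _ e n I).
have e_cover x : exists n, e n x.
  have [a alpha_a ax] : (\bigcup_(a in alpha) a) x by rewrite alpha_cover.
  by have [n _ ena] := @surj _ _ _ _ e a alpha_a; exists n; rewrite ena.
exact: (max_atom_cvg0 mT mu_preimage no_finite_invariant alpha_measurable
  alpha_trivIset alpha_e e_cover alphaAC mA Afin A_sweep_out Tcons A0).
Qed.
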